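(* Let $x,y$ be positive integers and $z,w$ positive real numbers such that $w-z$ is a positive integer with $w-z\geq x$. Then $$\sum_{j=x}^{w-z}\binom{j}{y}\binom{w-j}{z}=\sum_{i=\max\{0,\,x+y+z-w\}}^{y} \binom{x}{i}\binom{w-x+1}{z+y-i+1}.$$
   Context: Binomial coefficients are generalized binomial coefficients: for real $a,b$, $\binom{a}{b}=\frac{\Gamma(a+1)}{\Gamma(b+1)\Gamma(a-b+1)}$, where $\Gamma$ is the Gamma function; in particular, if $b$ is a positive integer then $\binom{a}{b}=\frac{a(a-1)\cdots(a-b+1)}{b!}$. *)

From Stdlib Require Import Reals.
From Coquelicot Require Import Coquelicot.
Open Scope R_scope.

Fixpoint rising (s : R) (n : nat) : R :=
  match n with
  | O => s
  | S k => rising s k * (s + INR (S k))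
  end.

(* Euler--Gauss definition of the Gamma function:
   Gamma s = lim_{n -> oo} n! n^s / (s (s+1) ... (s+n)),
   valid for every real s that is not a nonpositive integer. *)
Definition Gamma (s : R) : R :=
  real (Lim_seq (fun n => INR (Factorial.fact n) * Rpower (INR n) s / rising s n)).

Definition Binom (a b : R) : R :=
  Gamma (a + 1) / (Gamma (b + 1) * Gamma (a - b + 1)).

(* Both sides are sums of binomial coefficients whose upper and lower arguments differ by
   a natural number d, so the Gamma quotients reduce to the polynomial coefficients
   r (r-1) ... (r-d+1) / d!; a coefficient C(j, y) with j < y vanishes because the
   Euler-Gauss limit defining Gamma evaluates to 0 at the nonpositive integers, where the
   true Gamma has its poles.
   With n = m - x, t = j - x and D_k = C(z+k, k), the left side is
   sum_t C(x+t, y) D_(n-t).  Vandermonde's convolution C(x+t, y) = sum_i C(x, i) C(t, y-i)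
   and the upper convolution sum_t C(t, a) D_(n-t) = C(z+n+1, n-a) (for a <= n, and 0 for
   a > n), both consequences of Pascal's rule, turn it into sum_i C(x, i) C(z+n+1, n+i-y),
   which is the right side since z+n+1 = w-x+1.
   The facts Gamma(s+1) = s Gamma(s), Gamma(1) = 1 and Gamma > 0 on (0, oo) follow from the
   Euler-Gauss limit, whose sequence is increasing and bounded for s > 0. *)

From Stdlib Require Import Reals Lra Lia Factorial.
From Coquelicot Require Import Coquelicot.
Open Scope R_scope.

Lemma sum_n_m_shift {G : AbelianMonoid} (a : nat -> G) k n :
  sum_n_m a k (k + n) = sum_n (fun t => a (k + t)%nat) n.
Proof.
  revert a; induction k as [|k IH]; intros a; [reflexivity|].
  simpl. rewrite <- sum_n_m_S. apply IH.
Qed.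

(* Sums of reals, stated with [Rplus] and [Rmult]: the generic statements are equations in
   the carrier of an [AbelianMonoid], on which [ring] and [lra] fail. *)
Lemma sum_Sn_R (a : nat -> R) n : sum_n a (S n) = sum_n a n + a (S n).
Proof. exact (sum_Sn a n). Qed.

Lemma sum_Sn_l (a : nat -> R) n : sum_n a (S n) = a O + sum_n (fun t => a (S t)) n.
Proof. unfold sum_n. rewrite sum_Sn_m by lia. now rewrite sum_n_m_S. Qed.

Lemma sum_n_Rplus (u v : nat -> R) n : sum_n (fun k => u k + v k) n = sum_n u n + sum_n v n.
Proof. exact (sum_n_plus u v n). Qed.

Lemma sum_n_ext_R (a b : nat -> R) n :
  (forall i, (i <= n)%nat -> a i = b i) -> sum_n a n = sum_n b n.
Proof. exact (sum_n_ext_loc a b n). Qed.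

Lemma sum_n_Rmult_l a (u : nat -> R) n : sum_n (fun k => a * u k) n = a * sum_n u n.
Proof. exact (sum_n_mult_l a u n). Qed.

Lemma sum_n_Rmult_r a (u : nat -> R) n : sum_n (fun k => u k * a) n = sum_n u n * a.
Proof. exact (sum_n_mult_r a u n). Qed.

Lemma sum_n_R_zero (a : nat -> R) n : (forall i, (i <= n)%nat -> a i = 0) -> sum_n a n = 0.
Proof.
  intros Ha. rewrite (sum_n_ext_R a (fun _ => 0)) by exact Ha.
  rewrite sum_n_const. apply Rmult_0_r.
Qed.

Lemma sum_n_zero_prefix (a : nat -> R) lo n :
  (forall i, (i < lo)%nat -> a i = 0) -> (lo <= S n)%nat ->
  sum_n a n = sum_n_m a lo n.
Proof.
  intros Ha Hlo. destruct lo as [|lo]; [reflexivity|].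
  unfold sum_n. rewrite (sum_n_m_Chasles a 0 lo n) by lia.
  rewrite (sum_n_m_ext_loc a (fun _ => zero) 0 lo) by (intros; apply Ha; lia).
  now rewrite sum_n_m_const_zero, plus_zero_l.
Qed.

Fixpoint choose (r : R) (k : nat) : R :=
  match k with
  | O => 1
  | S k' => choose r k' * (r - INR k') / (INR k' + 1)
  end.

Lemma choose_absorption r k : choose (r + 1) (S k) = choose r k * (r + 1) / (INR k + 1).
Proof.
  induction k as [|k IH].
  - simpl. field.
  - change (choose (r + 1) (S (S k)))
      with (choose (r + 1) (S k) * (r + 1 - INR (S k)) / (INR (S k) + 1)).
    rewrite IH. simpl choose. rewrite S_INR. pose proof (pos_INR k). field. lra.
Qed.

Lemma choose_pascal r k : choose (r + 1) (S k) = choose r (S k) + choose r k.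
Proof. rewrite choose_absorption. simpl. pose proof (pos_INR k). field. lra. Qed.

Lemma choose_INR_lt t k : (t < k)%nat -> choose (INR t) k = 0.
Proof.
  induction k as [|k IH]; intros Htk; [lia|]. simpl.
  destruct (Nat.eq_dec k t) as [->|Hne].
  - unfold Rminus. rewrite Rplus_opp_r. lra.
  - rewrite IH by lia. lra.
Qed.

Lemma choose_vandermonde r t k :
  choose (r + INR t) k = sum_n (fun i => choose r i * choose (INR t) (k - i)) k.
Proof.
  revert k; induction t as [|t IH]; intros [|k]; try (rewrite sum_O; simpl; ring).
  - rewrite sum_Sn_R, Nat.sub_diag, sum_n_R_zero.
    + change (INR 0) with 0. rewrite Rplus_0_r. change (choose 0 0) with 1. ring.
    + intros i Hi. rewrite choose_INR_lt by lia. ring.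
  - rewrite S_INR, <- Rplus_assoc, choose_pascal, IH, IH, !sum_Sn_R, Nat.sub_diag.
    rewrite (sum_n_ext_R (fun i => choose r i * choose (INR t + 1) (S k - i))
      (fun i => choose r i * choose (INR t) (S k - i) + choose r i * choose (INR t) (k - i))).
    + rewrite sum_n_Rplus. simpl. ring.
    + intros i Hi. replace (S k - i)%nat with (S (k - i)) by lia.
      rewrite choose_pascal. ring.
Qed.

Lemma choose_upper_convolution z n k : (k <= n)%nat ->
  sum_n (fun t => choose (INR t) k * choose (z + INR (n - t)) (n - t)) n
  = choose (z + INR n + 1) (n - k) :> R.
Proof.
  revert k; induction n as [|n IH]; intros k Hk.
  - replace k with 0%nat by lia. rewrite sum_O. simpl. ring.
  - rewrite sum_Sn_l, Nat.sub_0_r.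
    change (fun t => choose (INR (S t)) k * choose (z + INR (S n - S t)) (S n - S t))
      with (fun t => choose (INR (S t)) k * choose (z + INR (n - t)) (n - t)).
    replace (z + INR (S n) + 1) with (z + INR n + 1 + 1) by (rewrite S_INR; ring).
    destruct k as [|k].
    + change (fun t => choose (INR (S t)) 0 * choose (z + INR (n - t)) (n - t))
        with (fun t => choose (INR t) 0 * choose (z + INR (n - t)) (n - t)).
      rewrite IH, !Nat.sub_0_r, choose_pascal by lia.
      rewrite S_INR, <- Rplus_assoc. simpl choose at 1. ring.
    + rewrite (sum_n_ext_R _ (fun t =>
          choose (INR t) (S k) * choose (z + INR (n - t)) (n - t)
          + choose (INR t) k * choose (z + INR (n - t)) (n - t))).
      2:{ intros t _. rewrite S_INR, choose_pascal. ring. }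
      rewrite sum_n_Rplus, (IH k), (choose_INR_lt 0) by lia.
      destruct (Compare_dec.le_lt_dec (S k) n) as [HSk|HSk].
      * rewrite IH by exact HSk.
        replace (n - k)%nat with (S (n - S k)) by lia.
        replace (S n - S k)%nat with (S (n - S k)) by lia.
        rewrite (choose_pascal (z + INR n + 1)). ring.
      * replace k with n by lia. rewrite sum_n_R_zero.
        -- rewrite Nat.sub_diag. replace (S n - S n)%nat with 0%nat by lia. simpl. ring.
        -- intros t Ht. rewrite choose_INR_lt by lia. ring.
Qed.

Lemma sum_choose_mul_choose r z n k :
  sum_n (fun t => choose (r + INR t) k * choose (z + INR (n - t)) (n - t)) n
  = sum_n_m (fun i => choose r i * choose (z + INR n + 1) (n + i - k)) (k - n) k.
Proof.
  set (conv a := sum_n (fun t => choose (INR t) a * choose (z + INR (n - t)) (n - t)) n).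
  transitivity (sum_n (fun i => choose r i * conv (k - i)%nat) k).
  { rewrite (sum_n_ext_R _ (fun t => sum_n (fun i =>
        choose r i * choose (INR t) (k - i) * choose (z + INR (n - t)) (n - t)) k)).
    2:{ intros t _. rewrite choose_vandermonde. symmetry. apply sum_n_Rmult_r. }
    rewrite sum_n_switch. apply sum_n_ext_R. intros i _.
    unfold conv. rewrite <- sum_n_Rmult_l. apply sum_n_ext_R. intros t _. ring. }
  (* For [i < k - n] the inner sum only involves [choose (INR t) (k - i)] with [t < k - i]. *)
  rewrite (sum_n_zero_prefix _ (k - n)); [| |lia].
  - apply sum_n_m_ext_loc. intros i Hi. unfold conv.
    rewrite choose_upper_convolution by lia. do 2 f_equal. lia.
  - intros i Hi. unfold conv. rewrite sum_n_R_zero; [ring|].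
    intros t Ht. rewrite choose_INR_lt by lia. ring.
Qed.

Definition Gamma_seq (s : R) (n : nat) : R :=
  INR (fact n) * Rpower (INR n) s / rising s n.

Lemma rising_gt0 s n : 0 < s -> 0 < rising s n.
Proof.
  intros Hs; induction n as [|n IH]; simpl; [exact Hs|].
  pose proof (pos_INR n). destruct n; apply Rmult_lt_0_compat; lra.
Qed.

Lemma Gamma_seq_gt0 s n : 0 < s -> 0 < Gamma_seq s n.
Proof.
  intros Hs. unfold Gamma_seq, Rpower. pose proof (INR_fact_lt_0 n).
  pose proof (exp_pos (s * ln (INR n))). pose proof (rising_gt0 s n Hs).
  apply Rdiv_lt_0_compat; [apply Rmult_lt_0_compat|]; assumption.
Qed.

Lemma ln_le_sub_1 t : 0 < t -> ln t <= t - 1.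
Proof.
  intros Ht. rewrite <- (ln_exp (t - 1)). apply ln_le; [exact Ht|].
  pose proof (exp_ineq1_le (t - 1)). lra.
Qed.

Lemma ln_sub_bounds p q : 0 < p -> p <= q ->
  (q - p) / q <= ln q - ln p <= (q - p) / p.
Proof.
  intros Hp Hpq. split.
  - pose proof (ln_le_sub_1 (p / q) ltac:(apply Rdiv_lt_0_compat; lra)) as H.
    rewrite ln_div in H by lra.
    replace (p / q - 1) with (- ((q - p) / q)) in H by (field; lra). lra.
  - pose proof (ln_le_sub_1 (q / p) ltac:(apply Rdiv_lt_0_compat; lra)) as H.
    rewrite ln_div in H by lra.
    replace (q / p - 1) with ((q - p) / p) in H by (field; lra). lra.
Qed.

Lemma exp_le_compat x y : x <= y -> exp x <= exp y.
Proof. intros [Hlt|Heq]; [left; apply exp_increasing, Hlt|rewrite Heq; apply Rle_refl]. Qed.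

Definition Gamma_log_step (s N : R) : R :=
  s * (ln (N + 1) - ln N) - (ln (s + N + 1) - ln (N + 1)).

Lemma Gamma_seq_succ s k : 0 < s ->
  Gamma_seq s (S (S k)) = Gamma_seq s (S k) * exp (Gamma_log_step s (INR (S k))).
Proof.
  intros Hs. set (N := INR (S k)).
  assert (HN : 0 < N) by (apply lt_0_INR; lia).
  assert (HSN : INR (S (S k)) = N + 1) by apply S_INR.
  unfold Gamma_seq, Gamma_log_step, Rpower.
  rewrite fact_simpl, mult_INR, HSN.
  change (rising s (S (S k))) with (rising s (S k) * (s + INR (S (S k)))). rewrite HSN.
  replace (s * (ln (N + 1) - ln N) - (ln (s + N + 1) - ln (N + 1)))
    with (ln (N + 1) + s * ln (N + 1) + - (s * ln N) + - ln (s + N + 1)) by ring.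
  rewrite !exp_plus, !exp_Ropp, !exp_ln by lra.
  pose proof (rising_gt0 s (S k) Hs). pose proof (exp_pos (s * ln N)).
  fold N. field. repeat split; lra.
Qed.

Lemma Gamma_log_step_bounds s N : 0 < s -> 1 <= N ->
  0 <= Gamma_log_step s N <= s * (s + 1) * (1 / N - 1 / (N + 1)).
Proof.
  intros Hs HN. unfold Gamma_log_step.
  destruct (ln_sub_bounds N (N + 1)) as [HN1 HN2]; try lra.
  destruct (ln_sub_bounds (N + 1) (s + N + 1)) as [Hs1 Hs2]; try lra.
  replace (N + 1 - N) with 1 in HN1, HN2 by ring.
  replace (s + N + 1 - (N + 1)) with s in Hs1, Hs2 by ring.
  split.
  - assert (s * (1 / (N + 1)) <= s * (ln (N + 1) - ln N)) by (apply Rmult_le_compat_l; lra).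
    replace (s / (N + 1)) with (s * (1 / (N + 1))) in Hs2 by (field; lra). lra.
  - assert (s * (ln (N + 1) - ln N) <= s * (1 / N)) by (apply Rmult_le_compat_l; lra).
    assert (s * (1 / N) - s / (s + N + 1) <= s * (s + 1) * (1 / N - 1 / (N + 1))).
    { replace (s * (1 / N) - s / (s + N + 1)) with (s * (s + 1) * / (N * (s + N + 1)))
        by (field; lra).
      replace (1 / N - 1 / (N + 1)) with (/ (N * (N + 1))) by (field; lra).
      apply Rmult_le_compat_l; [nra|]. apply Rinv_le_contravar; nra. }
    lra.
Qed.

Lemma Gamma_seq_le_succ s k : 0 < s -> Gamma_seq s (S k) <= Gamma_seq s (S (S k)).
Proof.
  intros Hs. rewrite Gamma_seq_succ by exact Hs.
  destruct (Gamma_log_step_bounds s (INR (S k))) as [Hstep _]; [exact Hs|apply (le_INR 1); lia|].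
  pose proof (exp_ineq1_le (Gamma_log_step s (INR (S k)))).
  pose proof (Gamma_seq_gt0 s (S k) Hs). nra.
Qed.

(* Telescoping the upper estimate of [Gamma_log_step]. *)
Lemma Gamma_seq_bound s k : 0 < s ->
  Gamma_seq s (S k) <= Gamma_seq s 1 * exp (s * (s + 1) * (1 - 1 / INR (S k))).
Proof.
  intros Hs. induction k as [|k IH].
  - replace (1 - 1 / INR 1) with 0 by (simpl; field). rewrite Rmult_0_r, exp_0. lra.
  - rewrite Gamma_seq_succ by exact Hs.
    set (N := INR (S k)) in *.
    assert (HN : 1 <= N) by (apply (le_INR 1); lia).
    replace (INR (S (S k))) with (N + 1) by (symmetry; apply S_INR).
    destruct (Gamma_log_step_bounds s N) as [_ Hstep]; [exact Hs|exact HN|].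
    apply Rle_trans with (Gamma_seq s 1 * exp (s * (s + 1) * (1 - 1 / N)) * exp (Gamma_log_step s N)).
    + apply Rmult_le_compat_r; [left; apply exp_pos|exact IH].
    + rewrite Rmult_assoc, <- exp_plus. apply Rmult_le_compat_l; [left; apply Gamma_seq_gt0, Hs|].
      apply exp_le_compat. lra.
Qed.

Lemma ex_finite_lim_Gamma_seq s : 0 < s -> ex_finite_lim_seq (fun k => Gamma_seq s (S k)).
Proof.
  intros Hs. apply ex_finite_lim_seq_incr with (M := Gamma_seq s 1 * exp (s * (s + 1))).
  - intros k. apply Gamma_seq_le_succ, Hs.
  - intros k. eapply Rle_trans; [apply Gamma_seq_bound, Hs|].
    apply Rmult_le_compat_l; [left; apply Gamma_seq_gt0, Hs|].
    apply exp_le_compat.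
    assert (0 < 1 / INR (S k)) by (apply Rdiv_lt_0_compat; [lra|apply lt_0_INR; lia]).
    nra.
Qed.

Lemma is_lim_seq_Gamma s : 0 < s -> is_lim_seq (Gamma_seq s) (Gamma s).
Proof.
  intros Hs. apply is_lim_seq_incr_1.
  destruct (ex_finite_lim_Gamma_seq s Hs) as [l Hl].
  unfold Gamma. fold (Gamma_seq s).
  rewrite <- Lim_seq_incr_1, (is_lim_seq_unique _ _ Hl). exact Hl.
Qed.

Lemma Gamma_gt0 s : 0 < s -> 0 < Gamma s.
Proof.
  intros Hs. apply Rlt_le_trans with (Gamma_seq s 1); [apply Gamma_seq_gt0, Hs|].
  apply (is_lim_seq_le (fun _ => Gamma_seq s 1) (fun k => Gamma_seq s (S k))
           (Gamma_seq s 1) (Gamma s)).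
  - intros k. induction k as [|k IH]; [apply Rle_refl|].
    eapply Rle_trans; [exact IH|apply Gamma_seq_le_succ, Hs].
  - apply is_lim_seq_const.
  - exact (proj1 (is_lim_seq_incr_1 _ _) (is_lim_seq_Gamma s Hs)).
Qed.

Lemma is_lim_seq_INR_div c : 0 < c -> is_lim_seq (fun n => INR n / (INR n + c)) 1.
Proof.
  intros Hc.
  assert (Hinv : is_lim_seq (fun n => / (INR n + c)) 0).
  { apply (is_lim_seq_inv _ p_infty); [|discriminate].
    eapply is_lim_seq_plus; [apply is_lim_seq_INR|apply is_lim_seq_const|constructor]. }
  assert (H : is_lim_seq (fun n => 1 - c * / (INR n + c)) (1 - c * 0)).
  { apply is_lim_seq_minus'; [apply is_lim_seq_const|].
    apply is_lim_seq_mult'; [apply is_lim_seq_const|exact Hinv]. }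
  rewrite Rmult_0_r, Rminus_0_r in H.
  eapply is_lim_seq_ext; [|exact H]. intros n.
  pose proof (pos_INR n). simpl. field. lra.
Qed.

Lemma rising_plus_1 s n : s * rising (s + 1) n = rising s (S n).
Proof.
  induction n as [|n IH]; [simpl; ring|].
  change (rising (s + 1) (S n)) with (rising (s + 1) n * (s + 1 + INR (S n))).
  change (rising s (S (S n))) with (rising s (S n) * (s + INR (S (S n)))).
  rewrite <- IH, (S_INR (S n)). ring.
Qed.

Lemma Gamma_plus_1 s : 0 < s -> Gamma (s + 1) = s * Gamma s.
Proof.
  intros Hs.
  assert (Hlim : is_lim_seq (Gamma_seq (s + 1)) (Gamma s * s * 1)).
  { apply is_lim_seq_ext_loc with (fun n => Gamma_seq s n * s * (INR n / (INR n + (s + 1)))).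
    - exists 1%nat. intros n Hn.
      assert (HN : 0 < INR n) by (apply lt_0_INR; lia).
      assert (Hr : rising (s + 1) n = rising s (S n) / s)
        by (rewrite <- rising_plus_1; field; lra).
      unfold Gamma_seq. rewrite Hr, Rpower_plus, Rpower_1 by exact HN.
      change (rising s (S n)) with (rising s n * (s + INR (S n))). rewrite S_INR.
      pose proof (rising_gt0 s n Hs). unfold Rpower. pose proof (exp_pos (s * ln (INR n))).
      field. repeat split; lra.
    - apply is_lim_seq_mult'; [apply is_lim_seq_mult'|apply is_lim_seq_INR_div; lra].
      + apply is_lim_seq_Gamma, Hs.
      + apply is_lim_seq_const. }
  pose proof (is_lim_seq_unique _ _ Hlim) as E.
  rewrite (is_lim_seq_unique _ _ (is_lim_seq_Gamma (s + 1) ltac:(lra))) in E.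
  injection E as E. rewrite E. ring.
Qed.

Lemma rising_1 n : rising 1 n = INR (fact (S n)).
Proof.
  induction n as [|n IH]; [simpl; ring|].
  change (rising 1 (S n)) with (rising 1 n * (1 + INR (S n))).
  rewrite IH, (fact_simpl (S n)), mult_INR, (S_INR (S n)). ring.
Qed.

Lemma Gamma_1 : Gamma 1 = 1.
Proof.
  assert (Hlim : is_lim_seq (Gamma_seq 1) 1).
  { apply is_lim_seq_ext_loc with (fun n => INR n / (INR n + 1)).
    - exists 1%nat. intros n Hn.
      assert (HN : 0 < INR n) by (apply lt_0_INR; lia).
      unfold Gamma_seq. rewrite Rpower_1, rising_1, fact_simpl, mult_INR, S_INR by exact HN.
      pose proof (INR_fact_lt_0 n). field. lra.
    - apply is_lim_seq_INR_div, Rlt_0_1. }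
  unfold Gamma. fold (Gamma_seq 1). rewrite (is_lim_seq_unique _ _ Hlim). reflexivity.
Qed.

Lemma rising_neg_INR k n : (k <= n)%nat -> rising (- INR k) n = 0.
Proof.
  induction n as [|n IH]; intros Hk.
  - replace k with 0%nat by lia. simpl. ring.
  - change (rising (- INR k) (S n)) with (rising (- INR k) n * (- INR k + INR (S n))).
    destruct (Nat.eq_dec k (S n)) as [->|Hne]; [ring|].
    rewrite IH by lia. ring.
Qed.

(* Junk value: the Euler-Gauss quotient divides by zero from [n = k] on, and [x / 0 = 0]. *)
Lemma Gamma_neg_INR k : Gamma (- INR k) = 0.
Proof.
  assert (Hlim : is_lim_seq (Gamma_seq (- INR k)) 0).
  { apply is_lim_seq_ext_loc with (fun _ => 0); [|apply is_lim_seq_const].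
    exists k. intros n Hn.
    unfold Gamma_seq. rewrite rising_neg_INR, Rdiv_0_r by exact Hn. reflexivity. }
  unfold Gamma. fold (Gamma_seq (- INR k)). rewrite (is_lim_seq_unique _ _ Hlim). reflexivity.
Qed.

Lemma Gamma_plus_INR s d : 0 < s ->
  Gamma (s + INR d) = Gamma s * INR (fact d) * choose (s + INR d - 1) d.
Proof.
  intros Hs. induction d as [|d IH].
  - simpl. rewrite Rplus_0_r. ring.
  - rewrite S_INR. pose proof (pos_INR d).
    replace (s + (INR d + 1)) with (s + INR d + 1) by ring.
    replace (s + INR d + 1 - 1) with (s + INR d - 1 + 1) by ring.
    rewrite Gamma_plus_1, IH, choose_absorption, fact_simpl, mult_INR, S_INR by lra.
    field. lra.
Qed.

Lemma Gamma_INR_plus_1 d : Gamma (INR d + 1) = INR (fact d).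
Proof.
  induction d as [|d IH].
  - simpl. rewrite Rplus_0_l. exact Gamma_1.
  - pose proof (pos_INR d).
    rewrite S_INR, Gamma_plus_1, IH, fact_simpl, mult_INR, S_INR by lra. ring.
Qed.

Lemma Binom_choose T b d : T - b = INR d -> 0 < b + 1 -> Binom T b = choose T d.
Proof.
  intros Hd Hb. unfold Binom.
  replace (T - b + 1) with (INR d + 1) by lra.
  replace (T + 1) with (b + 1 + INR d) by lra.
  rewrite Gamma_INR_plus_1, Gamma_plus_INR by exact Hb.
  replace (b + 1 + INR d - 1) with T by lra.
  pose proof (Gamma_gt0 (b + 1) Hb). pose proof (INR_fact_lt_0 d).
  field. lra.
Qed.

Lemma Binom_sym T b : Binom T b = Binom T (T - b).
Proof.
  unfold Binom. replace (T - (T - b) + 1) with (b + 1) by ring.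
  rewrite (Rmult_comm (Gamma (b + 1))). reflexivity.
Qed.

Lemma Binom_INR j k : Binom (INR j) (INR k) = choose (INR j) k.
Proof.
  destruct (Compare_dec.le_lt_dec k j) as [Hkj|Hjk].
  - rewrite Binom_sym. apply Binom_choose; [ring|].
    rewrite <- minus_INR by exact Hkj. pose proof (pos_INR (j - k)). lra.
  - rewrite choose_INR_lt by exact Hjk. unfold Binom.
    replace (INR j - INR k + 1) with (- INR (k - j - 1)).
    + rewrite Gamma_neg_INR, Rmult_0_r, Rdiv_0_r. reflexivity.
    + rewrite !minus_INR by lia. simpl. ring.
Qed.

Theorem lemma2p3 (x y : nat) (z w : R) (m : nat)
  (hx : (0 < x)%nat) (hy : (0 < y)%nat) (hz : 0 < z) (hw : 0 < w)
  (hm : w - z = INR m) (hm0 : (0 < m)%nat) (hxm : (x <= m)%nat) :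
  sum_n_m (fun j => Binom (INR j) (INR y) * Binom (w - INR j) z) x m
  = sum_n_m (fun i => Binom (INR x) (INR i) *
                      Binom (w - INR x + 1) (z + INR y - INR i + 1))
      (Nat.max 0 (x + y - m)) y.
Proof.
  set (n := (m - x)%nat).
  assert (Hn : INR n = INR m - INR x) by (apply minus_INR, hxm).
  assert (Hm : m = (x + n)%nat) by lia.
  rewrite Hm at 1. rewrite sum_n_m_shift.
  rewrite (sum_n_ext_R _ (fun t => choose (INR x + INR t) y * choose (z + INR (n - t)) (n - t))).
  2:{ intros t Ht. rewrite Binom_INR, plus_INR. f_equal.
      replace (w - (INR x + INR t)) with (z + INR (n - t)) by (rewrite minus_INR by lia; lra).
      apply Binom_choose; [ring|lra]. }
  rewrite sum_choose_mul_choose, Nat.max_0_l.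
  replace (x + y - m)%nat with (y - n)%nat by lia.
  apply sum_n_m_ext_loc. intros i Hi. rewrite Binom_INR. f_equal.
  replace (z + INR n + 1) with (w - INR x + 1) by lra.
  pose proof (le_INR _ _ (proj2 Hi)).
  symmetry. apply Binom_choose; [|lra].
  rewrite minus_INR, plus_INR by lia. lra.
Qed.
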